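(* Consider a $\mathrm{Knapsack}$ instance $(C,V)$ with LP relaxation $K$ and optimal integral value $\mathrm{OPT}$, and let $t\ge 2$ be an integer. Then $$\max\Big\{\sum_{i\in V}v_i\,y_{\{i\}}: y\in\mathrm{La}^t(K)\Big\}\le\Big(1+\frac{1}{t-1}\Big)\mathrm{OPT}.$$ In particular, the integrality gap of the $t$-th level of the Lasserre hierarchy for $\mathrm{Knapsack}$ is at most $t/(t-1)$.
   Context: A $\mathrm{Knapsack}$ instance consists of objects $V=[n]$ with sizes $c_i\ge 0$, values $v_i\ge 0$ and a capacity $C$ with $c_i\le C$ for all $i$; $\mathrm{OPT}$ is the maximum of $\sum_{i\in X}v_i$ over $X\subseteq V$ with $\sum_{i\in X}c_i\le C$. Its LP relaxation is $K=\{x\in[0,1]^n: g(x)\ge 0\}$ with the single constraint $g(x)=C-\sum_{i\in V}c_ix_i$. Notation: $\mathcal P_t(U)$ is the set of subsets of $U$ of size at most $t$. For a collection $\mathcal T$ of subsets and a vector $y$ indexed by subsets, $M_{\mathcal T}(y)$ is the symmetric matrix indexed by $\mathcal T$ with $(I,J)$-entry $y_{I\cup J}$. For an affine $g(x)=b+\sum_{j}a_jx_j$, $(g*y)_I=b\,y_I+\sum_j a_j y_{I\cup\{j\}}$. The $t$-th Lasserre lifted polytope $\mathrm{La}^t(K)$ is the set of $y\in[0,1]^{\mathcal P_{2t}(V)}$ with $y_\emptyset=1$, $M_{\mathcal P_t(V)}(y)\succeq0$, and $M_{\mathcal P_{t-1}(V)}(g*y)\succeq0$. *)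

From HB Require Import structures.
From mathcomp Require Import all_boot all_order all_algebra.
Set Implicit Arguments. Unset Strict Implicit. Unset Printing Implicit Defensive.
Import Order.TTheory GRing.Theory Num.Theory.
Local Open Scope ring_scope.

(* A vector y indexed by subsets is a function {set 'I_n} -> R; only its
   values on subsets of size <= 2t are constrained (the rest are irrelevant). *)

Definition Pt (n t : nat) : pred {set 'I_n} := fun I => (#|I| <= t)%N.
Arguments Pt : clear implicits.

Definition psd_on {R : realFieldType} {T : finType} (P : pred T)
  (M : T -> T -> R) : Prop :=
  forall x : T -> R, 0 <= \sum_(I | P I) \sum_(J | P J) x I * M I J * x J.

Definition moment_mx {R : realFieldType} {n : nat} (y : {set 'I_n} -> R)
  : {set 'I_n} -> {set 'I_n} -> R := fun I J => y (I :|: J).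

(* g(x) = C - sum_i c_i x_i ;  (g*y)_I = C y_I - sum_j c_j y_{I u {j}} *)
Definition knap_gy {R : realFieldType} {n : nat} (c : 'I_n -> R) (C : R)
  (y : {set 'I_n} -> R) : {set 'I_n} -> R :=
  fun I => C * y I - \sum_(j < n) c j * y (I :|: [set j]).

Definition Lasserre {R : realFieldType} {n : nat} (c : 'I_n -> R) (C : R)
  (t : nat) (y : {set 'I_n} -> R) : Prop :=
  [/\ y set0 = 1,
      (forall I : {set 'I_n}, (#|I| <= 2 * t)%N -> 0 <= y I <= 1),
      psd_on (Pt n t) (moment_mx y) &
      psd_on (Pt n (t - 1)) (moment_mx (knap_gy c C y))].

(* OPT = max { sum_{i in X} v_i : X subset V, sum_{i in X} c_i <= C }
   (values are nonnegative; 0 is used as the neutral element of max). *)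
Definition knapOPT {R : realFieldType} {n : nat} (c v : 'I_n -> R) (C : R) : R :=
  \big[Num.max/0]_(X : {set 'I_n} | \sum_(i in X) c i <= C) \sum_(i in X) v i.

(* Let eps = OPT / (t - 1) and call an item large when v_i > eps.  Any t - 1 large items
   overflow the knapsack, so the localizing constraint (g*y)_I >= 0 forces y_I = 0 on them,
   and positive semidefiniteness spreads this to every set containing t - 1 large items.
   After zeroing y on all such sets, the linear form (OPT + eps) y_∅ - sum_i v_i y_{i}
   splits, by conditioning on each large item l (w |-> w(. + l) and w |-> w - w(. + l)),
   into a sum over branches.  Each branch still has PSD moment matrices on the relevant
   supports, decides every large item integrally, and on the small items is a fractional
   knapsack solution; its value exceeds that of some feasible integral completion by at
   most one small item, i.e. by eps. *)

From HB Require Import structures.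
From mathcomp Require Import all_boot all_order all_algebra.
From mathcomp Require Import ring.
From Stdlib Require Import FunctionalExtensionality.
Set Implicit Arguments. Unset Strict Implicit. Unset Printing Implicit Defensive.
Import Order.TTheory GRing.Theory Num.Theory.
Local Open Scope ring_scope.

Section MomentForm.
Variables (R : realFieldType) (n : nat).
Local Notation vec := ({set 'I_n} -> R).

Definition mform (w x x' : vec) : R :=
  \sum_(A : {set 'I_n}) \sum_(B : {set 'I_n}) x A * x' B * w (A :|: B).
Definition mquad (w x : vec) : R := mform w x x.

Definition cond_in (l : 'I_n) (w : vec) : vec := fun I => w (I :|: [set l]).
Definition cond_out (l : 'I_n) (w : vec) : vec := fun I => w I - w (I :|: [set l]).

(* The adjoint of [cond_in l] for the moment form: the image of [x] under [A |-> A :|: [set l]]. *)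
Definition pushU (l : 'I_n) (x : vec) : vec :=
  fun A => \sum_(B : {set 'I_n} | B :|: [set l] == A) x B.

Lemma sum_pushU l x (F : vec) :
  \sum_(A : {set 'I_n}) pushU l x A * F A =
  \sum_(B : {set 'I_n}) x B * F (B :|: [set l]).
Proof.
rewrite /pushU; under eq_bigr do rewrite big_distrl /=.
rewrite (exchange_big_dep xpredT) //=; apply: eq_bigr => B _.
by rewrite (big_pred1 (B :|: [set l])) // => A /=; rewrite eq_sym.
Qed.

Lemma mform_pushUl l w x x' : mform w (pushU l x) x' = mform (cond_in l w) x x'.
Proof.
rewrite /mform; under eq_bigr do under eq_bigr do rewrite -mulrA.
under eq_bigr do rewrite -big_distrr /=.
rewrite sum_pushU; apply: eq_bigr => A _; rewrite big_distrr /=.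
by apply: eq_bigr => B _; rewrite mulrA /cond_in setUAC.
Qed.

Lemma mform_pushUr l w x x' : mform w x (pushU l x') = mform (cond_in l w) x x'.
Proof.
rewrite /mform; apply: eq_bigr => A _.
under eq_bigr do rewrite [x A * _]mulrC -mulrA.
rewrite (sum_pushU l x' (fun B => x A * w (A :|: B))); apply: eq_bigr => B _.
by rewrite mulrCA mulrA /cond_in setUA.
Qed.

Lemma mformBl w x1 x2 x' :
  mform w (fun A => x1 A - x2 A) x' = mform w x1 x' - mform w x2 x'.
Proof.
rewrite /mform -sumrB; apply: eq_bigr => A _; rewrite -sumrB.
by apply: eq_bigr => B _; rewrite !mulrBl.
Qed.

Lemma mformBr w x x1 x2 :
  mform w x (fun A => x1 A - x2 A) = mform w x x1 - mform w x x2.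
Proof.
rewrite /mform -sumrB; apply: eq_bigr => A _; rewrite -sumrB.
by apply: eq_bigr => B _; rewrite mulrBr mulrBl.
Qed.

Lemma mformBw w1 w2 x x' :
  mform (fun I => w1 I - w2 I) x x' = mform w1 x x' - mform w2 x x'.
Proof.
rewrite /mform -sumrB; apply: eq_bigr => A _; rewrite -sumrB.
by apply: eq_bigr => B _; rewrite mulrBr.
Qed.

Lemma cond_in_id l w : cond_in l (cond_in l w) = cond_in l w.
Proof. by apply: functional_extensionality => I; rewrite /cond_in -setUA setUid. Qed.

Lemma mquad_pushU l w x : mquad w (pushU l x) = mquad (cond_in l w) x.
Proof. by rewrite /mquad mform_pushUl mform_pushUr cond_in_id. Qed.

Lemma mquad_subpushU l w x :
  mquad w (fun A => x A - pushU l x A) = mquad (cond_out l w) x.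
Proof.
rewrite /mquad mformBl !mformBr !mform_pushUl !mform_pushUr cond_in_id.
by rewrite /cond_out mformBw subrr subr0.
Qed.

(* A branch [p] records, for each item [l] it mentions, whether [l] is conditioned to be in
   ([true]) or out of the set. *)
Definition cond (e : 'I_n * bool) (w : vec) : vec :=
  if e.2 then cond_in e.1 w else cond_out e.1 w.
Definition cond_vec (e : 'I_n * bool) (x : vec) : vec :=
  if e.2 then pushU e.1 x else fun A => x A - pushU e.1 x A.
Definition condw (p : seq ('I_n * bool)) (w : vec) : vec :=
  foldl (fun w e => cond e w) w p.
Definition condx (p : seq ('I_n * bool)) (x : vec) : vec := foldr cond_vec x p.

Lemma mquad_condx p w x : mquad w (condx p x) = mquad (condw p w) x.
Proof.
elim: p w => [|[l []] p IH] w //=.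
  by rewrite mquad_pushU IH.
by rewrite mquad_subpushU IH.
Qed.

Fixpoint branches (s : seq 'I_n) : seq (seq ('I_n * bool)) :=
  if s is l :: s' then
    [seq (l, true) :: p | p <- branches s'] ++ [seq (l, false) :: p | p <- branches s']
  else [:: [::]].

Lemma branches_decide s p : p \in branches s ->
  (forall l, l \in s -> exists b, (l, b) \in p) /\ (forall e, e \in p -> e.1 \in s).
Proof.
elim: s p => [|l s IH] p /=; first by rewrite inE => /eqP ->; split.
move=> ps; have [b [q qs ->]] : exists b, exists2 q, q \in branches s & p = (l, b) :: q.
  by move: ps; rewrite mem_cat; case/orP => /mapP [q qs ->]; [exists true | exists false]; exists q.
have [decq inq] := IH q qs; split=> [m | e]; rewrite !inE => /orP [/eqP -> | ].
- by exists b; rewrite inE eqxx.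
- by move=> /decq [b' qb']; exists b'; rewrite inE qb' orbT.
- by rewrite eqxx.
- by move=> /inq ->; rewrite orbT.
Qed.

Definition slack (K : R) (v : 'I_n -> R) (w : vec) : R :=
  K * w set0 - \sum_(i < n) v i * w [set i].

Lemma slack_cond K v l w : slack K v w = slack K v (cond_in l w) + slack K v (cond_out l w).
Proof.
rewrite /slack /cond_in /cond_out set0U mulrBr.
under [X in _ = _ + (_ - X)]eq_bigr do rewrite mulrBr.
by rewrite sumrB; ring.
Qed.

Lemma slack_branches K v s w : slack K v w = \sum_(p <- branches s) slack K v (condw p w).
Proof.
elim: s w => [|l s IH] w /=; first by rewrite big_seq1.
by rewrite big_cat !big_map /= -!IH -slack_cond.
Qed.

Definition decided_in (l : 'I_n) (w : vec) := forall I, w (I :|: [set l]) = w I.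
Definition decided_out (l : 'I_n) (w : vec) := forall I, w (I :|: [set l]) = 0.

Lemma condw_decided_in l p w : decided_in l w -> decided_in l (condw p w).
Proof.
elim: p w => [|[m []] p IH] w //= wl; apply: IH => I;
  by rewrite /cond /cond_in /cond_out /= ?wl setUAC wl.
Qed.

Lemma condw_decided_out l p w : decided_out l w -> decided_out l (condw p w).
Proof.
elim: p w => [|[m []] p IH] w //= wl; apply: IH => I;
  by rewrite /cond /cond_in /cond_out /= ?wl setUAC wl ?subrr.
Qed.

Lemma condw_in l p w : (l, true) \in p -> decided_in l (condw p w).
Proof.
elim: p w => [|e p IH] w //=; rewrite inE => /orP [/eqP <- | /IH //].
by apply: condw_decided_in => I; rewrite /cond /cond_in /= -setUA setUid.
Qed.

Lemma condw_out l p w : (l, false) \in p -> decided_out l (condw p w).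
Proof.
elim: p w => [|e p IH] w //=; rewrite inE => /orP [/eqP <- | /IH //].
by apply: condw_decided_out => I; rewrite /cond /cond_out /= -setUA setUid subrr.
Qed.

Definition supported (Z : {set 'I_n}) (x : vec) := forall A, x A != 0 -> A \subset Z.

Lemma supported_pushU (l : 'I_n) (Z : {set 'I_n}) (x : vec) :
  l \in Z -> supported Z x -> supported Z (pushU l x).
Proof.
move=> lZ xZ A; apply: contraNT => AZ; rewrite /pushU big1 // => B /eqP BlA.
apply: contraNeq AZ => /xZ BZ; by rewrite -BlA subUset BZ sub1set.
Qed.

Lemma supportedB (Z : {set 'I_n}) (x1 x2 : vec) :
  supported Z x1 -> supported Z x2 -> supported Z (fun A => x1 A - x2 A).
Proof.
move=> Z1 Z2 A; have [x1A0 | /Z1 //] := eqVneq (x1 A) 0.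
by rewrite x1A0 sub0r oppr_eq0 => /Z2.
Qed.

Lemma supported_condx p (Z : {set 'I_n}) (x : vec) : (forall e, e \in p -> e.1 \in Z) ->
  supported Z x -> supported Z (condx p x).
Proof.
elim: p => [|[l b] p IH] //= pZ xZ.
have lZ : l \in Z by apply: (pZ (l, b)); rewrite inE eqxx.
have pxZ : supported Z (condx p x) by apply: IH => // e ep; apply: pZ; rewrite inE ep orbT.
have pushZ := supported_pushU lZ pxZ.
by rewrite /cond_vec; case: b {pZ} => //=; apply: supportedB.
Qed.

Definition delta (A0 : {set 'I_n}) : vec := fun A => (A == A0)%:R.

Lemma supported_delta (Z A0 : {set 'I_n}) : A0 \subset Z -> supported Z (delta A0).
Proof. by move=> A0Z A; rewrite /delta pnatr_eq0 eqb0 negbK => /eqP ->. Qed.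

Lemma sum_delta A0 (F : vec) : \sum_(A : {set 'I_n}) delta A0 A * F A = F A0.
Proof.
rewrite (bigD1 A0) //= /delta eqxx mul1r big1 ?addr0 // => A /negbTE ->.
by rewrite mul0r.
Qed.

Lemma mquad_comb2 w (r : R) A B :
  mquad w (fun X => r * delta A X + delta B X) =
  r * (r * w A + w (A :|: B)) + (r * w (B :|: A) + w B).
Proof.
have sum2 (F : vec) : \sum_X (r * delta A X + delta B X) * F X = r * F A + F B.
  rewrite -(sum_delta A F) -(sum_delta B F) big_distrr -big_split /=.
  by apply: eq_bigr => X _; rewrite mulrDl mulrA.
rewrite /mquad /mform; under eq_bigr do under eq_bigr do rewrite -mulrA.
under eq_bigr do rewrite -big_distrr /=.
by rewrite sum2 !sum2 !setUid.
Qed.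

Lemma mquad_delta w A : mquad w (delta A) = w A.
Proof.
have -> : delta A = fun X => 0 * delta set0 X + delta A X.
  by apply: functional_extensionality => X; rewrite mul0r add0r.
by rewrite mquad_comb2 !mul0r !add0r.
Qed.

Lemma eq_mquad_on_support (w w' x : vec) :
  (forall A B, x A != 0 -> x B != 0 -> w (A :|: B) = w' (A :|: B)) ->
  mquad w x = mquad w' x.
Proof.
move=> ww'; apply: eq_bigr => A _; apply: eq_bigr => B _.
have [-> | xA] := eqVneq (x A) 0; first by rewrite !mul0r.
have [-> | xB] := eqVneq (x B) 0; first by rewrite mulr0 !mul0r.
by rewrite ww'.
Qed.

Lemma mquad_restrict (P : pred {set 'I_n}) (w x : vec) :
  (forall A B, ~~ (P A && P B) -> w (A :|: B) = 0) ->
  mquad w x = mquad w (fun A => if P A then x A else 0).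
Proof.
move=> w0; apply: eq_bigr => A _; apply: eq_bigr => B _.
by case: (boolP (P A && P B)) => [/andP [-> ->] // | /w0 ->]; rewrite !mulr0.
Qed.

Lemma mquad_ge0 k (w x : vec) : psd_on (Pt n k) (moment_mx w) ->
  (forall A, x A != 0 -> (#|A| <= k)%N) -> 0 <= mquad w x.
Proof.
move=> psdw xk; have := psdw x; congr (_ <= _).
rewrite /mquad /mform big_mkcond; apply: eq_bigr => A _.
case: (boolP (Pt n k A)) => Ak; last first.
  have -> : x A = 0 by apply: contraNeq Ak => /xk.
  by rewrite big1 // => B _; rewrite !mul0r.
rewrite big_mkcond; apply: eq_bigr => B _.
case: (boolP (Pt n k B)) => Bk; first by rewrite /moment_mx mulrAC.
have -> : x B = 0 by apply: contraNeq Bk => /xk.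
by rewrite mulr0 mul0r.
Qed.

Lemma knap_gy_condw c C p w : condw p (knap_gy c C w) = knap_gy c C (condw p w).
Proof.
elim: p w => [|[l b] p IH] w //=; rewrite -IH; congr condw.
apply: functional_extensionality => I; rewrite /knap_gy /cond /cond_in /cond_out.
case: b => /=; first by congr (_ - _); apply: eq_bigr => j _; rewrite setUAC.
under [in RHS]eq_bigr do rewrite mulrBr setUAC.
by rewrite mulrBr sumrB !opprB addrACA [RHS]addrACA (addrC (- _)).
Qed.

End MomentForm.

Arguments delta {R n} A0 _.

Section FractionalKnapsack.
Variables (R : realFieldType) (n : nat) (c v : 'I_n -> R).
Hypothesis c_ge0 : forall i, 0 <= c i.
Hypothesis v_ge0 : forall i, 0 <= v i.

Lemma exists_min_ratio (S : {set 'I_n}) : S != set0 ->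
  exists2 m, m \in S & forall i, i \in S -> v m * c i <= v i * c m.
Proof.
move=> /set0Pn [i0 i0S].
case: (pickP (fun j => (j \in S) && (0 < c j))) => [j0 /andP [j0S cj0] | noc].
  have [m /andP [mS cm] mmin] := @arg_minP _ R _ j0 (fun j => (j \in S) && (0 < c j))
    (fun j => v j / c j) (introT andP (conj j0S cj0)).
  exists m => // i iS; have [-> | ci0] := eqVneq (c i) 0; first by rewrite mulr0 mulr_ge0.
  have ci : 0 < c i by rewrite lt_def ci0 c_ge0.
  by have := mmin i; rewrite iS ci => /(_ isT); rewrite ler_pdivrMr // mulrAC ler_pdivlMr.
have c0 j : j \in S -> c j = 0.
  by move=> jS; apply/eqP; move: (noc j); rewrite jS lt_def c_ge0 andbT => /negbFE.
by exists i0 => // i iS; rewrite !c0 // !mulr0.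
Qed.

Definition ratio_split (S X : {set 'I_n}) (rho : R) :=
  [/\ X \subset S, 0 <= rho, {in X, forall i, rho * c i <= v i}
    & {in S :\: X, forall i, v i <= rho * c i}].

(* Greedy by decreasing ratio [v/c]: [X] is the longest prefix that fits in [B], [k0] the
   first item that does not, and [rho] its ratio. *)
Lemma greedy_split (S : {set 'I_n}) (B : R) : 0 <= B -> B < \sum_(i in S) c i ->
  exists X rho k0, ratio_split S X rho /\
    [/\ k0 \in S :\: X, v k0 = rho * c k0, \sum_(i in X) c i <= B
      & B < \sum_(i in X) c i + c k0].
Proof.
move=> B0; elim: {S}_.+1 {-2}S (ltnSn #|S|) => // N IH S ltSN BS.
have [m mS mmin] : exists2 m, m \in S & forall i, i \in S -> v m * c i <= v i * c m.
  apply: exists_min_ratio; apply: contraTneq BS => ->.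
  by rewrite big_set0 -leNgt.
have cS : \sum_(i in S) c i = c m + \sum_(i in S :\ m) c i by rewrite (big_setD1 m).
have ltS'N : (#|S :\ m| < N)%N by rewrite -ltnS (leq_trans _ ltSN) // ltnS (cardsD1 m S) mS.
have [S'B | BS'] := leP (\sum_(i in S :\ m) c i) B.
  have cm : 0 < c m.
    by rewrite -(ltrD2r (\sum_(i in S :\ m) c i)) -cS add0r (le_lt_trans S'B).
  have Sm : S :\: (S :\ m) = [set m].
    by rewrite setDDr setDv set0U (setIidPr _) // sub1set.
  exists (S :\ m), (v m / c m), m; split; last first.
    by rewrite Sm set11 divfK ?gt_eqF //; split => //; rewrite addrC -cS.
  split; [exact: subD1set | by rewrite divr_ge0 |
    by move=> i /setD1P [_ iS]; rewrite mulrAC ler_pdivrMr ?mmin |].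
  by move=> i; rewrite Sm inE => /eqP ->; rewrite divfK ?gt_eqF.
have [X [rho [k0 [[XS' rho0 Xge S'le] [k0S' vk0 XB Bk0]]]]] := IH _ ltS'N BS'.
have k0S : k0 \in S by move: k0S' => /setDP [/setD1P []].
have ck0 : 0 < c k0 by rewrite -(ltrD2l (\sum_(i in X) c i)) addr0 (le_lt_trans XB).
exists X, rho, k0; split; last by split => //; rewrite inE (setDP k0S').2 k0S.
split => //; first exact: subset_trans XS' (subD1set S m).
move=> i /setDP [iS iX]; have [-> | im] := eqVneq i m.
  by rewrite -(ler_pM2r ck0) mulrAC -vk0 mmin.
by apply: S'le; rewrite !inE im iS iX.
Qed.

Lemma fractional_knapsack (eps B a : R) (S : {set 'I_n}) (u : 'I_n -> R) :
  0 <= eps -> {in S, forall i, v i <= eps} -> 0 <= B -> 0 <= a ->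
  {in S, forall i, 0 <= u i <= a} -> \sum_(i in S) c i * u i <= B * a ->
  exists2 X : {set 'I_n}, X \subset S &
    \sum_(i in X) c i <= B /\ \sum_(i in S) v i * u i <= a * (\sum_(i in X) v i + eps).
Proof.
move=> eps0 veps B0 a0 u0a cuB.
have [SB | BS] := leP (\sum_(i in S) c i) B.
  exists S => //; split => //.
  apply: le_trans (_ : _ <= a * \sum_(i in S) v i) _; last by rewrite ler_wpM2l // lerDl.
  rewrite mulr_sumr; apply: ler_sum => i iS; rewrite mulrC ler_wpM2r //.
  by case/andP: (u0a i iS).
have [X [rho [k0 [[XS rho0 Xge Sle] [k0S vk0 XB Bk0]]]]] := greedy_split B0 BS.
exists X => //; split => //.
have split_rho : \sum_(i in S) v i * u i =
    \sum_(i in S) (v i - rho * c i) * u i + rho * \sum_(i in S) c i * u i.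
  rewrite big_distrr -big_split /=; apply: eq_bigr => i _.
  by rewrite mulrBl mulrA subrK.
have excess : \sum_(i in S) (v i - rho * c i) * u i <= a * \sum_(i in X) (v i - rho * c i).
  rewrite mulr_sumr (big_setID X) /= (setIidPr XS) -[leRHS]addr0 lerD //.
    apply: ler_sum => i iX; rewrite mulrC ler_wpM2r ?subr_ge0 ?Xge //.
    by case/andP: (u0a i (subsetP XS i iX)).
  apply: sumr_le0 => i /setDP [iS iX]; rewrite mulr_le0_ge0 ?subr_le0 ?Sle ?inE ?iX //.
  by case/andP: (u0a i iS).
have tail : rho * (B - \sum_(i in X) c i) <= eps.
  apply: le_trans (veps k0 (setDP k0S).1); rewrite vk0 ler_wpM2l //.
  by rewrite lerBlDl ltW.
rewrite split_rho; apply: le_trans (lerD excess (ler_wpM2l rho0 cuB)) _.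
have -> : a * \sum_(i in X) (v i - rho * c i) + rho * (B * a) =
    a * (\sum_(i in X) v i + rho * (B - \sum_(i in X) c i)).
  by rewrite sumrB -mulr_sumr; ring.
by rewrite ler_wpM2l // lerD2l.
Qed.

End FractionalKnapsack.

Lemma exists_subset_card (T : finType) (I U : {set T}) (k : nat) :
  I \subset U -> (#|I| <= k <= #|U|)%N ->
  exists A : {set T}, [/\ I \subset A, A \subset U & #|A| = k].
Proof.
move=> IU; elim: k => [|k IH] /andP [Ik kU].
  by exists I; split => //; apply/eqP; rewrite -leqn0.
have [<- | IneqSk] := eqVneq #|I| k.+1; first by exists I.
have [A [IA AU cA]] : exists A : {set T}, [/\ I \subset A, A \subset U & #|A| = k].
  by apply: IH; rewrite -ltnS ltn_neqAle IneqSk Ik ltnW.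
have /subsetPn [x xU xA] : ~~ (U \subset A).
  by apply: contraTN kU => /subset_leq_card; rewrite cA -ltnNge.
exists (x |: A); split; first exact: subset_trans IA (subsetUr _ _).
  by rewrite subUset sub1set xU.
by rewrite cardsU1 xA cA.
Qed.

Lemma sum_setU_disjoint (V : nmodType) (T : finType) (A B : {set T}) (F : T -> V) :
  [disjoint A & B] -> \sum_(i in A :|: B) F i = \sum_(i in A) F i + \sum_(i in B) F i.
Proof. by move=> AB; rewrite -bigU //; apply: eq_bigl => i; rewrite inE. Qed.

Section KnapsackOptimum.
Variables (R : realFieldType) (n : nat) (c v : 'I_n -> R) (C : R).

Lemma knapOPT_ge0 : (forall i, 0 <= v i) -> 0 <= knapOPT c v C.
Proof.
move=> v_ge0; rewrite /knapOPT; elim/big_ind: _ => //.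
  by move=> a b a0 b0; rewrite le_max a0.
by move=> X _; apply: sumr_ge0.
Qed.

Lemma le_knapOPT (X : {set 'I_n}) :
  \sum_(i in X) c i <= C -> \sum_(i in X) v i <= knapOPT c v C.
Proof. by move=> XC; rewrite /knapOPT (bigD1 X) //= le_max lexx. Qed.

End KnapsackOptimum.

Section LasserreVanishing.
Variables (R : realFieldType) (n : nat) (c : 'I_n -> R) (C : R) (t : nat).
Variable y : {set 'I_n} -> R.
Hypothesis c_ge0 : forall i, 0 <= c i.
Hypothesis yLa : Lasserre c C t y.

Lemma lasserre_bounds (U : {set 'I_n}) : (#|U| <= 2 * t)%N -> 0 <= y U <= 1.
Proof. by case: yLa => _ y01 _ _; apply: y01. Qed.

(* The localizing constraint [(g*y)_I >= 0] reads [C y_I >= sum_j c_j y_(I + j) >= c(I) y_I]. *)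
Lemma lasserre_infeasible_eq0 (I : {set 'I_n}) :
  (#|I| < t)%N -> C < \sum_(i in I) c i -> y I = 0.
Proof.
move=> It CI; case: yLa => _ _ _ psd_gy.
have gy_ge0 : 0 <= knap_gy c C y I.
  rewrite -(mquad_delta (knap_gy c C y)); apply: (mquad_ge0 psd_gy) => A.
  rewrite /delta pnatr_eq0 eqb0 negbK => /eqP ->.
  by rewrite subn1 -ltnS prednK // (leq_ltn_trans _ It).
have yIj_ge0 (j : 'I_n) : 0 <= y (I :|: [set j]).
  apply: (le_trans _ (andP (lasserre_bounds _)).1) => //.
  rewrite (leq_trans (leq_card_setU _ _).1) // cards1 addn1.
  by rewrite (leq_trans It) // leq_pmull.
have /andP [yI0 _] : 0 <= y I <= 1.
  by apply: lasserre_bounds; rewrite (leq_trans (ltnW It)) ?leq_pmull.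
have cIy : (\sum_(i in I) c i) * y I <= \sum_(j < n) c j * y (I :|: [set j]).
  rewrite big_distrl /= [leRHS](bigID (mem I)) /= -[leLHS]addr0 lerD //.
    by apply: ler_sum => i iI; rewrite (setUidPl _) ?sub1set.
  by apply: sumr_ge0 => j _; rewrite mulr_ge0.
apply/eqP; rewrite eq_le yI0 andbT leNgt; apply: contraTN gy_ge0 => yI.
by rewrite /knap_gy subr_ge0 -ltNge (lt_le_trans _ cIy) // ltr_pM2r.
Qed.

(* A vanishing diagonal entry of a PSD moment matrix kills its whole row. *)
Lemma lasserre_union_eq0 (A B : {set 'I_n}) :
  (#|A| <= t)%N -> (#|B| <= t)%N -> y A = 0 -> y (A :|: B) = 0.
Proof.
move=> At Bt yA0; case: yLa => _ _ psd_y _.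
apply/eqP; apply: contraT => z0; set z := y (A :|: B) in z0.
have zz0 : z + z != 0 by rewrite -mulr2n -mulr_natr mulf_neq0 // pnatr_eq0.
pose r := - (y B + 1) / (z + z).
have : 0 <= mquad y (fun X => r * delta A X + delta B X).
  apply: (mquad_ge0 psd_y) => X.
  have [-> _ // | XA] := eqVneq X A; have [-> _ // | XB] := eqVneq X B.
  by rewrite /delta (negbTE XA) (negbTE XB) mulr0 addr0 eqxx.
rewrite mquad_comb2 yA0 mulr0 add0r (setUC B A) -/z addrA -mulrDr.
by rewrite /r divfK // opprD addrAC addNr add0r oppr_ge0 ler10.
Qed.

Lemma lasserre_superset_eq0 (I U : {set 'I_n}) :
  I \subset U -> (#|I| <= t)%N -> (#|U| <= 2 * t)%N -> y I = 0 -> y U = 0.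
Proof.
move=> IU It U2t yI0; have [Ut | tU] := leqP #|U| t.
  by rewrite -(setUidPr IU) lasserre_union_eq0.
have [A [IA AU At]] : exists A : {set 'I_n}, [/\ I \subset A, A \subset U & #|A| = t].
  by apply: exists_subset_card; rewrite // It ltnW.
have yA0 : y A = 0 by rewrite -(setUidPr IA) lasserre_union_eq0 ?At.
rewrite -(setID U A) (setIidPr AU) lasserre_union_eq0 ?At //.
by rewrite cardsDS // At leq_subLR addnn -mul2n.
Qed.

End LasserreVanishing.

Section LasserreKnapsack.
Variables (R : realFieldType) (n : nat) (c v : 'I_n -> R) (C : R).
Hypothesis c_ge0 : forall i, 0 <= c i.
Hypothesis v_ge0 : forall i, 0 <= v i.
Variables (k : nat) (y : {set 'I_n} -> R).
Hypothesis yLa : Lasserre c C k.+2 y.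

Local Notation OPT := (knapOPT c v C).
Let eps := OPT / k.+1%:R.
Let large : {set 'I_n} := [set i | eps < v i].

Lemma large_infeasible (I : {set 'I_n}) :
  I \subset large -> #|I| = k.+1 -> C < \sum_(i in I) c i.
Proof.
move=> IL cI; rewrite ltNge; apply: contraL isT => /(le_knapOPT v) OPTge.
suff : OPT < \sum_(i in I) v i by rewrite ltNge OPTge.
have -> : OPT = \sum_(i in I) eps by rewrite sumr_const cI -mulr_natr divfK ?pnatr_eq0.
have /set0Pn [x xI] : I != set0 by rewrite -card_gt0 cI.
apply: ltr_sum; first by apply/hasP; exists x; rewrite ?mem_index_enum.
by move=> i /(subsetP IL); rewrite inE.
Qed.

Lemma lasserre_many_large_eq0 (U : {set 'I_n}) :
  (#|U| <= 2 * k.+2)%N -> (k.+1 <= #|U :&: large|)%N -> y U = 0.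
Proof.
move=> U2t kUL.
have [I [_ IUL cI]] :
    exists I : {set 'I_n}, [/\ set0 \subset I, I \subset U :&: large & #|I| = k.+1].
  by apply: exists_subset_card; rewrite ?sub0set ?cards0.
have [IU IL] : I \subset U /\ I \subset large by apply/andP; rewrite -subsetI.
apply: (lasserre_superset_eq0 yLa IU) => //; first by rewrite cI.
by apply: (lasserre_infeasible_eq0 c_ge0 yLa); rewrite ?cI ?large_infeasible.
Qed.

(* Zeroing [y] on sets with [k.+1] large items changes no constrained entry, and confines the
   moment matrices of the truncation to sets with few large items, whatever their size. *)
Definition ytrunc (U : {set 'I_n}) : R := if (k.+1 <= #|U :&: large|)%N then 0 else y U.
Local Notation gyt := (knap_gy c C ytrunc).

Lemma ytrunc_eq (U : {set 'I_n}) : (#|U| <= 2 * k.+2)%N -> ytrunc U = y U.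
Proof. by rewrite /ytrunc; case: ifP => // kUL U2t; rewrite lasserre_many_large_eq0. Qed.

Lemma knap_gy_ytrunc_eq (U : {set 'I_n}) :
  (#|U| < 2 * k.+2)%N -> gyt U = knap_gy c C y U.
Proof.
move=> U2t; rewrite /knap_gy ytrunc_eq; last exact: ltnW.
congr (_ - _).
apply: eq_bigr => j _; rewrite ytrunc_eq //.
by rewrite (leq_trans (leq_card_setU _ _).1) // cards1 addn1.
Qed.

Definition few_large (A : {set 'I_n}) : bool := (#|A :&: large| <= k)%N.

Lemma ytrunc_few_large (A B : {set 'I_n}) :
  ~~ (few_large A && few_large B) -> ytrunc (A :|: B) = 0.
Proof.
rewrite negb_and /few_large -!ltnNge /ytrunc => kL.
suff -> : (k.+1 <= #|(A :|: B) :&: large|)%N by [].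
case/orP: kL => /leq_trans; apply; apply/subset_leq_card/setSI.
  exact: subsetUl.
exact: subsetUr.
Qed.

Lemma knap_gy_ytrunc_few_large (A B : {set 'I_n}) :
  ~~ (few_large A && few_large B) -> gyt (A :|: B) = 0.
Proof.
move=> AB; rewrite /knap_gy ytrunc_few_large // mulr0 big1 ?subr0 // => j _.
rewrite -setUA ytrunc_few_large ?mulr0 //; apply: contra AB => /andP [-> fBj].
by rewrite /few_large (leq_trans _ fBj) // subset_leq_card // setSI // subsetUl.
Qed.

Lemma card_few_large (Z A : {set 'I_n}) :
  A \subset Z :|: large -> few_large A -> (#|A| <= #|Z| + k)%N.
Proof.
move=> AZL fA; rewrite -(cardsID large A) addnC leq_add // subset_leq_card //.
by apply/subsetP => x /setDP [/(subsetP AZL)]; rewrite inE => /orP [] // ->.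
Qed.

Section Leaf.
Variable p : seq ('I_n * bool).
Hypothesis p_branch : p \in branches (enum large).
Let u := condw p ytrunc.

Lemma branch_large e : e \in p -> e.1 \in large.
Proof. by move=> /(branches_decide p_branch).2; rewrite mem_enum. Qed.

Lemma leaf_mquad_ge0 (Z : {set 'I_n}) (x : {set 'I_n} -> R) :
  (#|Z| <= 1)%N -> supported Z x -> 0 <= mquad u x.
Proof.
move=> Z1 xZ; case: yLa => _ _ psd_y _.
have pxZ : supported (Z :|: large) (condx p x).
  apply: supported_condx => [e /branch_large eL | A /xZ AZ].
    by rewrite inE eL orbT.
  exact: subset_trans AZ (subsetUl _ _).
rewrite /u -mquad_condx (mquad_restrict _ ytrunc_few_large).
set x' := fun A => if few_large A then _ else _.
have x'k A : x' A != 0 -> (#|A| <= k.+1)%N.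
  rewrite /x'; case: ifP => [fA /pxZ AZ | _]; last by rewrite eqxx.
  by rewrite (leq_trans (card_few_large AZ fA)) // -add1n leq_add2r.
rewrite (@eq_mquad_on_support _ _ _ y) => [|A B /x'k Ak /x'k Bk].
  by apply: (mquad_ge0 psd_y) => A /x'k /leq_trans; apply.
rewrite ytrunc_eq // (leq_trans (leq_card_setU _ _).1) //.
by rewrite (leq_trans (leq_add Ak Bk)) // addnn -mul2n leq_mul2l ltnW.
Qed.

Lemma leaf_capacity : \sum_(j < n) c j * u [set j] <= C * u set0.
Proof.
case: yLa => _ _ _ psd_gy.
have pxL : supported large (condx p (delta set0 : {set 'I_n} -> R)).
  apply: supported_condx; first exact: branch_large.
  exact/supported_delta/sub0set.
have : 0 <= knap_gy c C u set0.
  rewrite /u -knap_gy_condw -(mquad_delta (condw _ _)) -mquad_condx.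
  rewrite (mquad_restrict _ knap_gy_ytrunc_few_large).
  set x' := fun A => if few_large A then _ else _.
  have x'k A : x' A != 0 -> (#|A| <= k)%N.
    rewrite /x'; case: ifP => [fA /pxL AL | _]; last by rewrite eqxx.
    by have := @card_few_large set0 A; rewrite set0U cards0; apply.
  rewrite (@eq_mquad_on_support _ _ _ (knap_gy c C y)) => [|A B /x'k Ak /x'k Bk].
    by apply: (mquad_ge0 psd_gy) => A /x'k /leq_trans; apply; rewrite subn1 leqnSn.
  rewrite knap_gy_ytrunc_eq // (leq_ltn_trans (leq_card_setU _ _).1) //.
  by rewrite (leq_ltn_trans (leq_add Ak Bk)) // addnn -mul2n ltn_mul2l /= ltnS leqnSn.
by rewrite /knap_gy subr_ge0; under eq_bigr do rewrite set0U.
Qed.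

Lemma leaf_set0_ge0 : 0 <= u set0.
Proof.
rewrite -mquad_delta; apply: (leaf_mquad_ge0 (Z := set0)); first by rewrite cards0.
exact/supported_delta/sub0set.
Qed.

Lemma leaf_set1_bounds (i : 'I_n) : 0 <= u [set i] <= u set0.
Proof.
have i1 : (#|[set i]| <= 1)%N by rewrite cards1.
apply/andP; split.
  by rewrite -mquad_delta; apply: (leaf_mquad_ge0 i1); apply: supported_delta.
rewrite -subr_ge0.
have := leaf_mquad_ge0 (x := fun X => -1 * delta [set i] X + delta set0 X) i1.
rewrite mquad_comb2 setU0 set0U !mulN1r addNr oppr0 add0r addrC; apply.
move=> X; have [-> _ | Xi] := eqVneq X [set i]; first exact: subxx.
have [-> _ | X0] := eqVneq X set0; first exact: sub0set.
by rewrite /delta (negbTE Xi) (negbTE X0) mulr0 addr0 eqxx.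
Qed.

Lemma leaf_large_decided (l : 'I_n) : l \in large ->
  u [set l] = u set0 \/ u [set l] = 0.
Proof.
rewrite -mem_enum => /(branches_decide p_branch).1 [[] lp]; rewrite -[[set l]]set0U.
  by left; apply: condw_in.
by right; apply: condw_out.
Qed.

Let taken := [set l in large | u [set l] == u set0].

Lemma leaf_sum_split (f : 'I_n -> R) :
  \sum_(i < n) f i * u [set i] =
  (\sum_(i in taken) f i) * u set0 + \sum_(i in ~: large) f i * u [set i].
Proof.
rewrite (bigID (mem large)) /=; congr (_ + _); last by apply: eq_bigl => i; rewrite in_setC.
rewrite (bigID (mem taken)) /= [X in _ + X]big1 ?addr0 => [|i /andP [iL iS]]; last first.
  have [uiu | ->] := leaf_large_decided iL; last by rewrite mulr0.
  by rewrite inE iL uiu eqxx in iS.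
rewrite big_distrl /=; apply: eq_big => [i | i /andP [_]].
  by rewrite andb_idl // inE => /andP [].
by rewrite inE => /andP [_ /eqP ->].
Qed.

Lemma leaf_slack_ge0 : 0 <= slack (OPT + eps) v u.
Proof.
have [u00 | u0_gt0] := eqVneq (u set0) 0.
  rewrite /slack u00 mulr0 sub0r oppr_ge0 big1 // => i _.
  by have := leaf_set1_bounds i; rewrite u00 -eq_le => /eqP <-; rewrite mulr0.
have{u0_gt0} u0_gt0 : 0 < u set0 by rewrite lt_def u0_gt0 leaf_set0_ge0.
pose B := C - \sum_(i in taken) c i.
have cB : \sum_(i in ~: large) c i * u [set i] <= B * u set0.
  by have := leaf_capacity; rewrite leaf_sum_split mulrBl lerBrDl.
have B0 : 0 <= B.
  rewrite -(pmulr_lge0 _ u0_gt0) (le_trans _ cB) //.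
  by apply: sumr_ge0 => i _; rewrite mulr_ge0 // (andP (leaf_set1_bounds i)).1.
have eps_ge0 : 0 <= eps by rewrite divr_ge0 ?knapOPT_ge0.
have small : {in ~: large, forall i, v i <= eps} by move=> i; rewrite !inE -leNgt.
have [X XL [cX vX]] := fractional_knapsack c_ge0 v_ge0 eps_ge0 small B0 (ltW u0_gt0)
  (fun i _ => leaf_set1_bounds i) cB.
have takenL : taken \subset large by apply/subsetP => l; rewrite inE => /andP [].
have takenX_disj : [disjoint taken & X].
  by rewrite disjoint_sym disjoints_subset (subset_trans XL) // setCS.
have c_takenX : \sum_(i in taken) c i + \sum_(i in X) c i <= C by rewrite -lerBrDl.
have := @le_knapOPT R n c v C (taken :|: X); rewrite !sum_setU_disjoint // => /(_ c_takenX) OPTge.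
rewrite /slack leaf_sum_split subr_ge0 (le_trans (lerD (lexx _) vX)) //.
by rewrite [u set0 * _]mulrC -mulrDl ler_wpM2r ?(ltW u0_gt0) // addrA lerD2r.
Qed.

End Leaf.

Lemma lasserre_knapsack_gap :
  \sum_(i < n) v i * y [set i] <= (1 + 1 / k.+1%:R) * OPT.
Proof.
have slack_ge0 : 0 <= slack (OPT + eps) v ytrunc.
  rewrite (slack_branches _ _ (enum large)) big_seq.
  by apply: sumr_ge0 => p; apply: leaf_slack_ge0.
move: slack_ge0; rewrite /slack subr_ge0 ytrunc_eq ?cards0 //.
case: yLa => -> _ _ _; rewrite mulr1 mulrDl mul1r div1r mulrC.
suff -> : \sum_(i < n) v i * ytrunc [set i] = \sum_(i < n) v i * y [set i] by [].
by apply: eq_bigr => i _; rewrite ytrunc_eq // cards1.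
Qed.

End LasserreKnapsack.

Theorem mainTheorem10 (R : realFieldType) (n : nat) (c v : 'I_n -> R) (C : R)
  (hc : forall i, 0 <= c i) (hv : forall i, 0 <= v i) (hcC : forall i, c i <= C)
  (t : nat) (ht : (2 <= t)%N) (y : {set 'I_n} -> R) :
  Lasserre c C t y ->
  \sum_(i < n) v i * y [set i] <= (1 + 1 / (t - 1)%:R) * knapOPT c v C.
Proof.
case: t ht => [|[|k]] // _ yLa.
by rewrite subn1; exact: (lasserre_knapsack_gap hc hv yLa).
Qed.
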